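(* Let $\mathscr{O}$ be an operad in $\mathbbm{k}$-vector spaces and $\mu\in\mathscr{O}(2)$ satisfy the right Leibniz condition. Suppose $F\in\mathcal{F}_{\mathscr{O}}$ satisfies $\kappa_\mu F\in\mathcal{F}^\mu_{\mathscr{O}}$. Then for every subobject $K\subset F$, $\kappa_\mu K\in\mathcal{F}^\mu_{\mathscr{O}}$.
   Context: $\mathbf{Cat}\,\mathscr{O}$ is the $\mathbbm{k}$-linear PROP associated to $\mathscr{O}$ (objects $\mathbb{N}$, $\mathbf{Cat}\,\mathscr{O}(m,n)=\bigoplus_{f:\{1..m\}\to\{1..n\}}\bigotimes_i\mathscr{O}(|f^{-1}(i)|)$, $\boxplus$ = addition on objects); $\mathcal{F}_{\mathscr{O}}$ is the category of $\mathbbm{k}$-linear functors $\mathbf{Cat}\,\mathscr{O}\to\mathbbm{k}$-vector spaces. $\delta F(n)=F(n+1)$, $\xi$ acting by $F(\xi\boxplus\mathrm{Id}_1)$. For $1\le i\le n$, $\mu_i(n)\in\mathbf{Cat}\,\mathscr{O}(n+1,n)$ is given by the map $j\mapsto j$ ($j\le n$), $n+1\mapsto i$, identity on singleton fibres and $\mu$ with inputs $(i,n+1)$ over $i$. Right Leibniz condition: $\mu\circ(\nu\boxplus\mathrm{Id}_1)=\nu\circ\sum_i\mu_i(n)$ in $\mathscr{O}(n+1)$ for all $n,\nu\in\mathscr{O}(n)$; then $\widetilde\mu_F(n)=F(\sum_i\mu_i(n))$ defines a natural transformation $\widetilde\mu_F:\delta F\to F$. $\mathcal{F}^\mu_{\mathscr{O}}$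 is the full subcategory of $F$ with $\widetilde\mu_F=0$, and $\kappa_\mu F:=\ker\widetilde\mu_F$. *)

(* Operads are encoded in the (standard, equivalent)
   "species" form: O(S) for every finite set S, relabelling along bijections,
   and composition along maps of finite sets.  O(n) of the paper is O('I_n);
   decorations on a fibre f^{-1}(i) are elements of O(fibre), the fibre being
   ordered as a subset of 'I_m (this is the paper's identification of the
   fibre with {1..|f^{-1}(i)|}). *)
From HB Require Import structures.
From mathcomp Require Import all_boot all_algebra.
Set Implicit Arguments. Unset Strict Implicit. Unset Printing Implicit Defensive.
Import GRing.Theory.
Local Open Scope ring_scope.

Definition fib (S T : finType) (h : {ffun S -> T}) (t : T) : finType :=
  {s : S | h s == t}.

Definition fcomp (S T U : finType) (h1 : {ffun S -> T}) (h2 : {ffun T -> U})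
  : {ffun S -> U} := [ffun s => h2 (h1 s)].

Lemma bij_inj_surj (S T : finType) (f : S -> T) :
  injective f -> (forall y, exists x, f x = y) -> bijective f.
Proof.
move=> finj fsurj; apply: inj_card_bij => //.
rewrite -(card_codom finj); apply: subset_leq_card; apply/subsetP=> y _.
by case: (fsurj y) => x <-; apply: codom_f.
Qed.

Section Fibres.
Variables (S T U : finType) (h1 : {ffun S -> T}) (h2 : {ffun T -> U}).

Lemma res_proof u (x : fib (fcomp h1 h2) u) : h2 (h1 (val x)) == u.
Proof. by have := valP x; rewrite /fcomp ffunE. Qed.

Definition res u : {ffun fib (fcomp h1 h2) u -> fib h2 u} :=
  [ffun x => exist _ (h1 (val x)) (res_proof x)].

Lemma bfib_proof1 u (a : fib h2 u) (s : fib h1 (val a)) :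
  fcomp h1 h2 (val s) == u.
Proof. by rewrite /fcomp ffunE (eqP (valP s)) (valP a). Qed.

Lemma bfib_proof2 u (a : fib h2 u) (s : fib h1 (val a)) :
  res u (exist _ (val s) (bfib_proof1 s)) == a.
Proof. by apply/eqP/val_inj; rewrite /res ffunE /= (eqP (valP s)). Qed.

Definition bfib u (a : fib h2 u) (s : fib h1 (val a)) : fib (res u) a :=
  exist _ (exist _ (val s) (bfib_proof1 s)) (bfib_proof2 s).

Lemma bfib_bij u (a : fib h2 u) : bijective (@bfib u a).
Proof.
apply: bij_inj_surj.
  by move=> s1 s2 [] /val_inj.
move=> [[s ps] qs]; have qs' : h1 s == val a.
  by have := f_equal val (eqP qs); rewrite /res ffunE /= => ->.
by exists (exist _ s qs'); do 2 apply: val_inj.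
Qed.

End Fibres.

Lemma unit_id_proof (S : finType) (s : S) : ([ffun x => x] : {ffun S -> S}) s == s.
Proof. by rewrite ffunE. Qed.
Definition unit_id (S : finType) (s : S) (_ : 'I_1) : fib [ffun x : S => x] s :=
  exist _ s (unit_id_proof s).
Lemma unit_id_bij (S : finType) (s : S) : bijective (@unit_id S s).
Proof.
apply: bij_inj_surj; first by move=> i j _; rewrite (ord1 i) (ord1 j).
move=> [x px]; exists ord0; apply: val_inj => /=.
by move: px; rewrite ffunE => /eqP.
Qed.

Definition fib1_val (S : finType) (h : {ffun S -> 'I_1}) (x : fib h ord0) : S := val x.
Lemma fib1_bij (S : finType) (h : {ffun S -> 'I_1}) : bijective (@fib1_val S h).
Proof.
apply: bij_inj_surj; first by move=> x y /val_inj.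
move=> s; have p : h s == ord0 by rewrite (ord1 (h s)).
by exists (exist _ s p).
Qed.

Section EquivDom.
Variables (S' S T : finType) (sigma : S' -> S) (psig : bijective sigma)
          (h : {ffun S -> T}).
Definition hsig : {ffun S' -> T} := [ffun x => h (sigma x)].
Lemma fibdom_proof t (x : fib hsig t) : h (sigma (val x)) == t.
Proof. by have := valP x; rewrite /hsig ffunE. Qed.
Definition fibdom t (x : fib hsig t) : fib h t := exist _ (sigma (val x)) (fibdom_proof x).
Lemma fibdom_bij t : bijective (@fibdom t).
Proof.
apply: bij_inj_surj.
  by move=> x y [] /(bij_inj psig) /val_inj.
move=> [s ps]; case: psig => g gK Kg.
have q : hsig (g s) == t by rewrite /hsig ffunE Kg.
by exists (exist _ (g s) q); apply: val_inj => /=; rewrite Kg.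
Qed.
End EquivDom.

Section EquivCod.
Variables (S T T' : finType) (h : {ffun S -> T}) (tau : T -> T')
          (ptau : bijective tau).
Definition htau : {ffun S -> T'} := [ffun x => tau (h x)].
Lemma fibcod_proof t (x : fib htau (tau t)) : h (val x) == t.
Proof.
have := valP x; rewrite /htau ffunE => /eqP /(bij_inj ptau) ->; exact: eqxx.
Qed.
Definition fibcod t (x : fib htau (tau t)) : fib h t := exist _ (val x) (fibcod_proof x).
Lemma fibcod_bij t : bijective (@fibcod t).
Proof.
apply: bij_inj_surj; first by move=> x y [] /val_inj.
move=> [s ps]; have q : htau s == tau t by rewrite /htau ffunE (eqP ps).
by exists (exist _ s q); apply: val_inj.
Qed.
End EquivCod.

Record opdata (K : fieldType) := OpData {
  ob : finType -> lmodType K;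
  rel : forall (S T : finType) (e : S -> T), bijective e -> ob S -> ob T;
  oone : ob 'I_1;
  ocomp : forall (S T : finType) (h : {ffun S -> T}),
            ob T -> (forall t : T, ob (fib h t)) -> ob S
}.
Arguments rel {K} o {S T e} _ _.
Arguments oone {K} o.
Arguments ocomp {K} o {S T} h _ _.

Section Operad.
Variables (K : fieldType) (O : opdata K).

Definition is_operad : Prop :=
  [/\ (forall (S T : finType) (e : S -> T) (p : bijective e) (a : K) (x y : ob O S),
         rel O p (a *: x + y) = a *: rel O p x + rel O p y),
      (forall (S T : finType) (e e' : S -> T) (p : bijective e) (p' : bijective e')
              (x : ob O S), e =1 e' -> rel O p x = rel O p' x),
      (forall (S : finType) (p : bijective (@id S)) (x : ob O S), rel O p x = x),
      (forall (S T U : finType) (e1 : S -> T) (e2 : T -> U) (p1 : bijective e1)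
              (p2 : bijective e2) (p12 : bijective (e2 \o e1)) (x : ob O S),
         rel O p12 x = rel O p2 (rel O p1 x)) &
  [/\
      (forall (S T : finType) (h : {ffun S -> T}) (a : K) (x y : ob O T) phi,
         ocomp O h (a *: x + y) phi = a *: ocomp O h x phi + ocomp O h y phi),
      (forall (S T : finType) (h : {ffun S -> T}) (x : ob O T)
              (phi : forall t, ob O (fib h t)) (t : T) (a : K) (y z : ob O (fib h t)),
         ocomp O h x (dfwith phi (a *: y + z))
         = a *: ocomp O h x (dfwith phi y) + ocomp O h x (dfwith phi z)),
      (forall (S : finType) (x : ob O S),
         ocomp O [ffun s : S => s] x (fun s => rel O (unit_id_bij s) (oone O)) = x),
      (forall (S : finType) (h : {ffun S -> 'I_1}) (phi : forall t, ob O (fib h t)),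
         ocomp O h (oone O) phi = rel O (fib1_bij h) (phi ord0)) &
  [/\
      (forall (S T U : finType) (h1 : {ffun S -> T}) (h2 : {ffun T -> U})
              (x : ob O U) (phi : forall u, ob O (fib h2 u))
              (psi : forall t, ob O (fib h1 t)),
         ocomp O h1 (ocomp O h2 x phi) psi
         = ocomp O (fcomp h1 h2) x
             (fun u => ocomp O (res h1 h2 u) (phi u)
                         (fun a => rel O (@bfib_bij _ _ _ h1 h2 u a) (psi (val a))))),
      (forall (S' S T : finType) (sigma : S' -> S) (p : bijective sigma)
              (h : {ffun S -> T}) (x : ob O T) (psi : forall t, ob O (fib (hsig sigma h) t)),
         rel O p (ocomp O (hsig sigma h) x psi)
         = ocomp O h x (fun t => rel O (fibdom_bij p h t) (psi t))) &
      (forall (S T T' : finType) (h : {ffun S -> T}) (tau : T -> T')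
              (p : bijective tau) (x : ob O T) (phi : forall t', ob O (fib (htau h tau) t')),
         ocomp O (htau h tau) (rel O p x) phi
         = ocomp O h x (fun t => rel O (fibcod_bij h p t) (phi (tau t))))]]].

End Operad.

(* Cat O(m,n) = (+)_{f : 'I_m -> 'I_n} (x)_i O(f^{-1}(i)).
   It is spanned by the "decorated maps" (f ; (theta_i)_i) below (pure tensors
   in the summand of f).  A K-linear functor out of Cat O is the same as an
   assignment on decorated maps which is multilinear in the decorations and
   compatible with identities and composition of decorated maps. *)

Section Prop_.
Variables (K : fieldType) (O : opdata K).

Record dmor (m n : nat) := DMor {
  dmap : {ffun 'I_m -> 'I_n};
  ddeco : forall i : 'I_n, ob O (fib dmap i) }.
Arguments DMor {m n}.

Definition did (n : nat) : dmor n n :=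
  DMor [ffun x => x] (fun i => rel O (unit_id_bij i) (oone O)).

Definition dcomp (m n p : nat) (g : dmor n p) (f : dmor m n) : dmor m p :=
  DMor (fcomp (dmap f) (dmap g))
       (fun j => ocomp O (res (dmap f) (dmap g) j) (ddeco g j)
                   (fun a => rel O (@bfib_bij _ _ _ (dmap f) (dmap g) j a)
                                   (ddeco f (val a)))).

(* -- xi |-> xi [+] Id_1 (the new point is the last one, ord_max) -- *)
Section Ext.
Variables (m n : nat) (f : {ffun 'I_m -> 'I_n}).

Definition extmap : {ffun 'I_m.+1 -> 'I_n.+1} :=
  [ffun x => if unlift (@ord_max m) x is Some a then lift (@ord_max n) (f a)
             else ord_max].

Lemma extmap_lift a : extmap (lift ord_max a) = lift ord_max (f a).
Proof. by rewrite /extmap ffunE liftK. Qed.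
Lemma extmap_max : extmap ord_max = ord_max.
Proof. by rewrite /extmap ffunE unlift_none. Qed.

Section Some_.
Variables (y : 'I_n.+1) (i : 'I_n) (e : unlift ord_max y = Some i).
Lemma ext1_proof (s : fib f i) : extmap (lift ord_max (val s)) == y.
Proof.
rewrite extmap_lift (eqP (valP s)); move: e; case: unliftP => // j -> [->].
exact: eqxx.
Qed.
Definition ext1 (s : fib f i) : fib extmap y := exist (fun x => extmap x == y) (lift ord_max (val s)) (ext1_proof s).
Lemma ext1_bij : bijective ext1.
Proof.
apply: bij_inj_surj.
  move=> s1 s2 E; apply: val_inj; apply: (@lift_inj _ ord_max).
  exact: (f_equal val E).
move: e; case: unliftP => // j Dy [Dj]; rewrite {}Dj in Dy.
move=> [x px].
suff [s Hs] : exists s : fib f i, lift ord_max (val s) = x.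
  by exists s; apply: val_inj.
move: px; case: (unliftP ord_max x) => [a ->|->].
  rewrite extmap_lift Dy => /eqP H; have fa := lift_inj H.
  have q : f a == i by rewrite fa.
  by exists (exist _ a q).
rewrite extmap_max Dy => /eqP H; have := neq_lift (@ord_max n) i.
by rewrite -H eqxx.
Qed.
End Some_.

Section None_.
Variables (y : 'I_n.+1) (e : unlift ord_max y = None).
Lemma ext2_proof : extmap ord_max == y.
Proof. by rewrite extmap_max; move: e; case: unliftP => // ->. Qed.
Definition ext2 (_ : 'I_1) : fib extmap y := exist (fun x => extmap x == y) ord_max ext2_proof.
Lemma ext2_bij : bijective ext2.
Proof.
apply: bij_inj_surj; first by move=> a b _; rewrite (ord1 a) (ord1 b).
move: e; case: unliftP => // Dy _ [x px]; exists ord0; apply: val_inj => /=.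
suff -> : x = ord_max by [].
move: px; rewrite Dy; case: (unliftP ord_max x) => [a ->|-> //].
rewrite extmap_lift => /eqP H; have := neq_lift (@ord_max n) (f a).
by rewrite H eqxx.
Qed.
End None_.

Definition extdeco (theta : forall i, ob O (fib f i)) (y : 'I_n.+1)
  : ob O (fib extmap y) :=
  match unlift ord_max y as o return unlift ord_max y = o -> ob O (fib extmap y) with
  | Some i => fun e => rel O (ext1_bij e) (theta i)
  | None => fun e => rel O (ext2_bij e) (oone O)
  end erefl.
End Ext.

Definition dext (m n : nat) (xi : dmor m n) : dmor m.+1 n.+1 :=
  DMor (extmap (dmap xi)) (extdeco (ddeco xi)).

Section Mu.
Variables (mu : ob O 'I_2) (n : nat) (i : 'I_n).

Definition mumap : {ffun 'I_n.+1 -> 'I_n} :=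
  [ffun x => if unlift (@ord_max n) x is Some a then a else i].

Lemma mumap_lift a : mumap (lift ord_max a) = a.
Proof. by rewrite /mumap ffunE liftK. Qed.
Lemma mumap_max : mumap ord_max = i.
Proof. by rewrite /mumap ffunE unlift_none. Qed.

(* over i : the fibre {i, n+1}; input 0 of mu goes to i, input 1 to n+1 *)
Section Two.
Variables (k : 'I_n) (e : i = k).
Definition mu2pt (z : 'I_2) : 'I_n.+1 :=
  if z == ord0 then lift ord_max i else ord_max.
Lemma mu2_proof z : mumap (mu2pt z) == k.
Proof. by rewrite /mu2pt; case: ifP => _; rewrite ?mumap_lift ?mumap_max e. Qed.
Definition mu2 (z : 'I_2) : fib mumap k := exist (fun x => mumap x == k) (mu2pt z) (mu2_proof z).
Lemma mu2_bij : bijective mu2.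
Proof.
apply: bij_inj_surj.
  move=> a b /(f_equal val) /=; rewrite /mu2pt.
  case: a => [[|[|a]] pa] //; case: b => [[|[|b]] pb] //= E;
    try by apply: val_inj.
  - by have := neq_lift (@ord_max n) i; rewrite E eqxx.
  - by have := neq_lift (@ord_max n) i; rewrite -E eqxx.
move=> [x px].
suff [z Hz] : exists z, mu2pt z = x by exists z; apply: val_inj.
move: px; case: (unliftP ord_max x) => [a ->|->].
  rewrite mumap_lift -e => /eqP ->; exists ord0.
  by rewrite /mu2pt eqxx.
by exists (@Ordinal 2 1 isT); rewrite /mu2pt.
Qed.
End Two.

Section One.
Variables (k : 'I_n) (ne : i <> k).
Lemma mu1_proof : mumap (lift ord_max k) == k.
Proof. by rewrite mumap_lift. Qed.
Definition mu1 (_ : 'I_1) : fib mumap k := exist (fun x => mumap x == k) (lift ord_max k) mu1_proof.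
Lemma mu1_bij : bijective mu1.
Proof.
apply: bij_inj_surj; first by move=> a b _; rewrite (ord1 a) (ord1 b).
move=> [x px]; exists ord0; apply: val_inj => /=.
suff -> : x = lift ord_max k by [].
move: px; case: (unliftP ord_max x) => [a ->|->]; first by rewrite mumap_lift => /eqP ->.
by rewrite mumap_max => /eqP.
Qed.
End One.

Definition mudeco (k : 'I_n) : ob O (fib mumap k) :=
  match i =P k with
  | ReflectT e => rel O (mu2_bij e) mu
  | ReflectF ne => rel O (mu1_bij ne) (oone O)
  end.

Definition mu_i : dmor n.+1 n := DMor mumap mudeco.
End Mu.

Lemma mor1_proof (m : nat) (j : 'I_1) (z : 'I_m) :
  ([ffun _ => ord0] : {ffun 'I_m -> 'I_1}) z == j.
Proof. by rewrite ffunE (ord1 j). Qed.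
Definition mor1_fun (m : nat) (j : 'I_1) (z : 'I_m) : fib [ffun _ => ord0] j :=
  exist _ z (mor1_proof j z).
Lemma mor1_bij (m : nat) (j : 'I_1) : bijective (@mor1_fun m j).
Proof.
apply: bij_inj_surj; first by move=> a b [].
by move=> [z pz]; exists z; apply: val_inj.
Qed.
Definition mor1 (m : nat) (x : ob O 'I_m) : dmor m 1 :=
  DMor [ffun _ => ord0] (fun j => rel O (@mor1_bij m j) x).

Definition to1 (m : nat) (alpha : dmor m 1) : ob O 'I_m :=
  rel O (fib1_bij (dmap alpha)) (ddeco alpha ord0).

(* right Leibniz condition:  mu o (nu [+] Id_1) = nu o sum_i mu_i(n) in O(n+1) *)
Definition right_leibniz (mu : ob O 'I_2) : Prop :=
  forall (n : nat) (nu : ob O 'I_n),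
    to1 (dcomp (mor1 mu) (dext (mor1 nu)))
    = \sum_(i < n) to1 (dcomp (mor1 nu) (mu_i mu i)).

Record fdata := FData {
  Fob : nat -> lmodType K;
  Fmor : forall m n : nat, dmor m n -> Fob m -> Fob n }.
Arguments Fmor f {m n} _ _.

Definition is_lfunctor (F : fdata) : Prop :=
  [/\
      (forall m n (alpha : dmor m n) (a : K) (v w : Fob F m),
         Fmor F alpha (a *: v + w) = a *: Fmor F alpha v + Fmor F alpha w),
      (* F is K-linear on Cat O(m,n): multilinear in the decorations *)
      (forall m n (f : {ffun 'I_m -> 'I_n}) (theta : forall i, ob O (fib f i))
              (i : 'I_n) (a : K) (x y : ob O (fib f i)) (v : Fob F m),
         Fmor F (DMor f (dfwith theta (a *: x + y))) v
         = a *: Fmor F (DMor f (dfwith theta x)) v + Fmor F (DMor f (dfwith theta y)) v),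
      (forall n (v : Fob F n), Fmor F (did n) v = v) &
      (forall m n p (g : dmor n p) (f : dmor m n) (v : Fob F m),
         Fmor F (dcomp g f) v = Fmor F g (Fmor F f v))].

Definition delta (F : fdata) : fdata :=
  @FData (fun n => Fob F n.+1) (fun m n alpha v => Fmor F (dext alpha) v).

Definition mutilde (mu : ob O 'I_2) (F : fdata) (n : nat) (v : Fob F n.+1) : Fob F n :=
  \sum_(i < n) Fmor F (mu_i mu i) v.
Arguments mutilde mu F n v : clear implicits.

(* subobjects of F : subfunctors, i.e. families of subspaces stable under
   the action of Cat O *)
Definition subfunctor (F : fdata) (P : forall n, {pred Fob F n}) : Prop :=
  [/\ (forall n, 0 \in P n),
      (forall n (a : K) (v w : Fob F n), v \in P n -> w \in P n -> a *: v + w \in P n) &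
      (forall m n (alpha : dmor m n) (v : Fob F m), v \in P m -> Fmor F alpha v \in P n)].

(* a subfunctor P of G (with the induced functor structure) lies in F^mu,
   i.e. its own mu~ (the restriction of mu~_G) vanishes *)
Definition sub_in_Fmu (mu : ob O 'I_2) (G : fdata) (P : forall n, {pred Fob G n}) : Prop :=
  forall n (v : Fob G n.+1), v \in P n.+1 -> mutilde mu G n v = 0.

(* kappa_mu K = ker (mu~_K : delta K -> K), for a subobject K = P of F,
   as a subfunctor of delta F *)
Definition kappa (mu : ob O 'I_2) (F : fdata) (P : forall n, {pred Fob F n})
  : forall n, {pred Fob (delta F) n} :=
  fun n => [pred v : Fob F n.+1 | (v \in P n.+1) && (mutilde mu F n v == 0)].

Definition fullsub (F : fdata) : forall n, {pred Fob F n} := fun n => predT.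

End Prop_.
Arguments sub_in_Fmu {K O} mu G P.
Arguments kappa {K O} mu F P n _.
Arguments subfunctor {K O} F P.
Arguments fullsub {K O} F n _.
Arguments mutilde {K O} mu F n v.
Arguments delta {K O} F.
Arguments right_leibniz {K O} mu.
Arguments is_lfunctor {K O} F.

From HB Require Import structures.
From mathcomp Require Import all_boot all_algebra.
Local Open Scope ring_scope.

Section KappaMonotone.
Variables (K : fieldType) (O : opdata K) (mu : ob O 'I_2).

Lemma kappa_subset (F : fdata O) (P Q : forall n : nat, {pred Fob F n}) :
  (forall n, {subset P n <= Q n}) ->
  forall n, {subset kappa mu F P n <= kappa mu F Q n}.
Proof.
by move=> sPQ n v; rewrite !inE => /andP [/sPQ -> ->].
Qed.

Lemma sub_in_Fmu_subset (G : fdata O) (P Q : forall n : nat, {pred Fob G n}) :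
  (forall n, {subset P n <= Q n}) ->
  sub_in_Fmu mu G Q -> sub_in_Fmu mu G P.
Proof. by move=> sPQ muQ n v /sPQ; apply: muQ. Qed.

End KappaMonotone.

(* kappa K is a subfunctor of kappa F and F^mu is closed under subobjects. *)
Theorem corollary3p17 (K : fieldType) (O : opdata K) (mu : ob O 'I_2)
    (F : fdata O) (P : forall n : nat, {pred Fob F n}) :
  is_operad O ->
  right_leibniz mu ->
  is_lfunctor F ->
  sub_in_Fmu mu (delta F) (kappa mu F (fullsub F)) ->
  subfunctor F P ->
  sub_in_Fmu mu (delta F) (kappa mu F P).
Proof.
move=> _ _ _ kappaF_in_Fmu _.
apply: sub_in_Fmu_subset kappaF_in_Fmu.
exact: kappa_subset.
Qed.
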